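(* Let $\mathcal{B}$ be a Borel-measurable partition of $\Omega$ with $\underline{P}(B)>0$ for all $B\in\mathcal{B}$, and let $A\in\mathscr{B}(\Omega)$. If $\mathcal{B}$ dilates (respectively strictly dilates) $A$ under either Dempster's rule or the Geometric rule, then $\mathcal{B}$ dilates (respectively strictly dilates) $A$ under the generalized Bayes rule.
   Context: $\Omega$ is a separable, completely metrizable space with Borel $\sigma$-algebra $\mathscr{B}(\Omega)$; $\underline{P}$ is a Choquet capacity of order 2 on $\mathscr{B}(\Omega)$ (a coherent lower probability with weakly compact set of dominating measures satisfying $\underline{P}(A\cup B)\ge\underline{P}(A)+\underline{P}(B)-\underline{P}(A\cap B)$); $\Pi=\{P:P\ge\underline{P}\}$, $\underline{P}(A)=\inf_{P\in\Pi}P(A)$, $\overline{P}(A)=\sup_{P\in\Pi}P(A)=1-\underline{P}(A^c)$. Generalized Bayes rule: $\underline{P}_{\mathfrak{B}}(A\mid B)=\inf_{P\in\Pi}P(A\cap B)/P(B)$, $\overline{P}_{\mathfrak{B}}(A\mid B)=\sup_{P\in\Pi}P(A\cap B)/P(B)$. Dempster's rule: $\overline{P}_{\mathfrak{D}}(A\mid B)=\overline{P}(A\cap B)/\overline{P}(B)$, $\underline{P}_{\mathfrak{D}}(A\mid B)=1-\overline{P}_{\mathfrak{D}}(A^c\mid B)$. Geometric rule: $\underline{P}_{\mathfrak{G}}(A\mid B)=\underline{P}(A\cap B)/\underline{P}(B)$, $\overline{P}_{\mathfrak{G}}(A\mid B)=1-\underline{P}_{\mathfrak{G}}(A^c\mid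 B)$. For a rule with conditional lower/upper probabilities $\underline{P}_\bullet,\overline{P}_\bullet$, $\mathcal{B}$ strictly dilates $A$ if $\sup_{B\in\mathcal{B}}\underline{P}_\bullet(A\mid B)<\underline{P}(A)\le\overline{P}(A)<\inf_{B\in\mathcal{B}}\overline{P}_\bullet(A\mid B)$; $\mathcal{B}$ dilates $A$ if this holds with either (but not both) outer strict inequality allowed to be an equality. *)

From HB Require Import structures.
From mathcomp Require Import all_boot all_order all_algebra.
From mathcomp Require Import all_classical all_reals all_analysis.
Import Order.TTheory GRing.Theory Num.Theory.
Import numFieldNormedType.Exports.

Set Implicit Arguments.
Unset Strict Implicit.
Unset Printing Implicit Defensive.

Local Open Scope classical_set_scope.
Local Open Scope ring_scope.

Notation Borel T := (g_sigma_algebraType (@open T)).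

Section ImpreciseProbability.
Variables (R : realType) (T : completePseudoMetricType R).

Definition pr (P : probability (Borel T) R) (A : set (Borel T)) : R := fine (P A).

Definition pint (P : probability (Borel T) R) (f : T -> R) : R :=
  fine (\int[P]_x (f x)%:E).

Definition bounded_continuous (f : T -> R) : Prop :=
  continuous f /\ exists M : R, forall x, `|f x| <= M.

(* Basic neighbourhoods of P for the weak topology on probability measures
   (the coarsest topology making Q |-> \int f dQ continuous for every
   bounded continuous f). *)
Definition weak_nbhs (P : probability (Borel T) R)
    (N : set (probability (Borel T) R)) : Prop :=
  exists (fs : seq (T -> R)) (e : R), 0 < e /\
    (forall f, f \in fs -> bounded_continuous f) /\
    [set Q | forall f, f \in fs -> `|pint Q f - pint P f| < e] `<=` N.

Definition weakly_compact (K : set (probability (Borel T) R)) : Prop :=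
  forall F : set_system (probability (Borel T) R), ProperFilter F -> F K ->
    exists2 P, K P & forall N S, weak_nbhs P N -> F S -> (S `&` N) !=set0.

Definition core (lP : set (Borel T) -> R) : set (probability (Borel T) R) :=
  [set P | forall A, measurable A -> lP A <= pr P A].

Definition upperP (lP : set (Borel T) -> R) (A : set (Borel T)) : R :=
  sup [set pr P A | P in core lP].

(* Choquet capacity of order 2: coherent lower probability (lower envelope
   of its nonempty core), with weakly compact core, and 2-monotone. *)
Definition choquet2 (lP : set (Borel T) -> R) : Prop :=
  [/\ core lP !=set0,
      (forall A, measurable A -> lP A = inf [set pr P A | P in core lP]),
      weakly_compact (core lP) &
      (forall A B, measurable A -> measurable B ->
         lP (A `|` B) >= lP A + lP B - lP (A `&` B))].

Definition borel_partition (BB : set (set (Borel T))) : Prop :=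
  [/\ (forall B, BB B -> measurable B),
      (forall B C, BB B -> BB C -> B <> C -> B `&` C = set0) &
      \bigcup_(B in BB) B = setT].

Definition GB_low (lP : set (Borel T) -> R) (A B : set (Borel T)) : R :=
  inf [set pr P (A `&` B) / pr P B | P in core lP].
Definition GB_up (lP : set (Borel T) -> R) (A B : set (Borel T)) : R :=
  sup [set pr P (A `&` B) / pr P B | P in core lP].

Definition D_up (lP : set (Borel T) -> R) (A B : set (Borel T)) : R :=
  upperP lP (A `&` B) / upperP lP B.
Definition D_low (lP : set (Borel T) -> R) (A B : set (Borel T)) : R :=
  1 - D_up lP (~` A) B.

Definition G_low (lP : set (Borel T) -> R) (A B : set (Borel T)) : R :=
  lP (A `&` B) / lP B.
Definition G_up (lP : set (Borel T) -> R) (A B : set (Borel T)) : R :=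
  1 - G_low lP (~` A) B.

Definition strictly_dilates (lP : set (Borel T) -> R)
    (low up : set (Borel T) -> set (Borel T) -> R)
    (BB : set (set (Borel T))) (A : set (Borel T)) : Prop :=
  [/\ sup [set low A B | B in BB] < lP A,
      lP A <= upperP lP A &
      upperP lP A < inf [set up A B | B in BB]].

Definition dilates (lP : set (Borel T) -> R)
    (low up : set (Borel T) -> set (Borel T) -> R)
    (BB : set (set (Borel T))) (A : set (Borel T)) : Prop :=
  [/\ sup [set low A B | B in BB] <= lP A,
      lP A <= upperP lP A &
      upperP lP A < inf [set up A B | B in BB]] \/
  [/\ sup [set low A B | B in BB] < lP A,
      lP A <= upperP lP A &
      upperP lP A <= inf [set up A B | B in BB]].

End ImpreciseProbability.

(* For every P in the core, P(.|B) is a probability, so the Bayes interval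
   [inf_P P(A|B), sup_P P(A|B)] contains the Geometric and the Dempster
   intervals: multiplying P(A|B) >= inf_P P(A|B) by P(B) >= lP(B) and taking
   the infimum over P bounds the Geometric lower probability, the symmetric
   supremum argument bounds the Dempster upper probability, and
   P(~A|B) = 1 - P(A|B) transfers both bounds to the other two endpoints.
   Hence on every cell the Bayes rule has smaller conditional lower and larger
   conditional upper probabilities, and any (strict) dilation under either rule
   persists.  Only coherence of lP (it is the lower envelope of its nonempty
   core) is used: neither the topology of T, nor weak compactness, nor
   2-monotonicity plays a role. *)
From HB Require Import structures.
From mathcomp Require Import all_boot all_order all_algebra.
From mathcomp Require Import all_classical all_reals all_analysis.
From mathcomp Require Import lra.
Import Order.TTheory GRing.Theory Num.Theory.
Import numFieldNormedType.Exports.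

Set Implicit Arguments.
Unset Strict Implicit.
Unset Printing Implicit Defensive.

Local Open Scope classical_set_scope.
Local Open Scope ring_scope.

Section SupInfImage.
Variables (R : realType) (I : Type) (S : set I) (f g : I -> R).
Hypothesis le_fg : forall i, S i -> f i <= g i.

Lemma le_sup_image (M : R) : (forall i, S i -> g i <= M) ->
  sup (f @` S) <= sup (g @` S).
Proof.
move=> gM; have [->|/set0P[i Si]] := eqVneq S set0; first by rewrite !image_set0.
apply: ge_sup; first by exists (f i), i.
move=> _ [j Sj <-]; apply: le_trans (le_fg Sj) _.
apply: ub_le_sup; last by exists j.
by exists M => _ [k Sk <-]; exact: gM.
Qed.

Lemma le_inf_image (M : R) : (forall i, S i -> M <= f i) ->
  inf (f @` S) <= inf (g @` S).
Proof.
move=> Mf; have [->|/set0P[i Si]] := eqVneq S set0; first by rewrite !image_set0.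
apply: lb_le_inf; first by exists (g i), i.
move=> _ [j Sj <-]; apply: le_trans _ (le_fg Sj).
apply: ge_inf; last by exists j.
by exists M => _ [k Sk <-]; exact: Mf.
Qed.

End SupInfImage.

Section ConditionalProbability.
Variables (R : realType) (T : completePseudoMetricType R).
Variable P : probability (Borel T) R.

Definition cond_pr (A B : set (Borel T)) : R := pr P (A `&` B) / pr P B.

Lemma EFin_pr X : measurable X -> (pr P X)%:E = P X.
Proof. by move=> mX; rewrite /pr fineK // fin_num_measure. Qed.

Lemma pr_ge0 X : 0 <= pr P X.
Proof. exact: fine_ge0. Qed.

Lemma le_pr X Y : measurable X -> measurable Y -> X `<=` Y -> pr P X <= pr P Y.
Proof.
by move=> mX mY XY; rewrite -lee_fin !EFin_pr //; apply: le_measure; rewrite ?inE.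
Qed.

Lemma pr_setI_setC A B : measurable A -> measurable B ->
  pr P B = pr P (A `&` B) + pr P (~` A `&` B).
Proof.
move=> mA mB; have mAB : measurable (A `&` B) by exact: measurableI.
have mCAB : measurable (~` A `&` B) by apply: measurableI => //; exact: measurableC.
apply/EFin_inj; rewrite EFinD !EFin_pr // (measureDI _ mB mA) addeC.
by rewrite setDE !(setIC B).
Qed.

Variable B : set (Borel T).
Hypothesis PB_gt0 : 0 < pr P B.

Lemma cond_pr_ge0 A : 0 <= cond_pr A B.
Proof. by rewrite divr_ge0 ?pr_ge0. Qed.

Lemma cond_pr_le1 A : measurable A -> measurable B -> cond_pr A B <= 1.
Proof. by move=> mA mB; rewrite ler_pdivrMr // mul1r le_pr //; exact: measurableI. Qed.

Lemma cond_prMpr A : cond_pr A B * pr P B = pr P (A `&` B).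
Proof. by rewrite divfK // gt_eqF. Qed.

Lemma cond_prC A : measurable A -> measurable B ->
  cond_pr (~` A) B = 1 - cond_pr A B.
Proof.
move=> mA mB; apply: (mulIf (lt0r_neq0 PB_gt0)).
rewrite mulrBl mul1r !cond_prMpr (pr_setI_setC mA mB); lra.
Qed.

End ConditionalProbability.

Section LowerEnvelope.
Variables (R : realType) (T : completePseudoMetricType R).
Variable lP : set (Borel T) -> R.
Hypothesis core_n0 : core lP !=set0.
Hypothesis lP_infE : forall X, measurable X -> lP X = inf [set pr P X | P in core lP].

Lemma lP_le_pr P X : core lP P -> measurable X -> lP X <= pr P X.
Proof. by move=> cP mX; exact: cP. Qed.

Lemma lP_ge_lb X c : measurable X ->
  (forall P, core lP P -> c <= pr P X) -> c <= lP X.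
Proof.
move=> mX lbX; rewrite lP_infE //; apply: lb_le_inf.
  by case: core_n0 => P cP; exists (pr P X), P.
by move=> _ [P cP <-]; exact: lbX.
Qed.

Lemma lP_ge0 X : measurable X -> 0 <= lP X.
Proof. by move=> mX; apply: lP_ge_lb => // P _; exact: pr_ge0. Qed.

Lemma le_lP X Y : measurable X -> measurable Y -> X `<=` Y -> lP X <= lP Y.
Proof.
move=> mX mY XY; apply: lP_ge_lb => // P cP.
exact: le_trans (lP_le_pr cP mX) (le_pr P mX mY XY).
Qed.

Lemma pr_le_upperP P X : core lP P -> measurable X -> pr P X <= upperP lP X.
Proof.
move=> cP mX; apply: ub_le_sup; last by exists P.
by exists 1 => _ [Q _ <-]; rewrite -lee_fin EFin_pr // probability_le1.
Qed.

Lemma upperP_le_ub X c : (forall P, core lP P -> pr P X <= c) -> upperP lP X <= c.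
Proof.
move=> ubX; apply: ge_sup; first by case: core_n0 => P cP; exists (pr P X), P.
by move=> _ [P cP <-]; exact: ubX.
Qed.

Lemma lP_le_upperP X : measurable X -> lP X <= upperP lP X.
Proof.
move=> mX; case: core_n0 => P cP.
exact: le_trans (lP_le_pr cP mX) (pr_le_upperP cP mX).
Qed.

Lemma upperP_ge0 X : measurable X -> 0 <= upperP lP X.
Proof. by move=> mX; exact: le_trans (lP_ge0 mX) (lP_le_upperP mX). Qed.

End LowerEnvelope.

Section ConditioningRules.
Variables (R : realType) (T : completePseudoMetricType R).
Variable lP : set (Borel T) -> R.
Hypothesis core_n0 : core lP !=set0.
Hypothesis lP_infE : forall X, measurable X -> lP X = inf [set pr P X | P in core lP].
Variable B : set (Borel T).
Hypotheses (mB : measurable B) (lPB_gt0 : 0 < lP B).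

Let pr_gt0 P : core lP P -> 0 < pr P B.
Proof. by move=> cP; exact: lt_le_trans lPB_gt0 (lP_le_pr cP mB). Qed.

Let upperP_gt0 : 0 < upperP lP B.
Proof. exact: lt_le_trans lPB_gt0 (lP_le_upperP core_n0 mB). Qed.

Lemma GB_low_le_cond_pr P A : core lP P -> GB_low lP A B <= cond_pr P A B.
Proof.
move=> cP; apply: ge_inf; last by exists P.
by exists 0 => _ [Q _ <-]; exact: cond_pr_ge0.
Qed.

Lemma cond_pr_le_GB_up P A : core lP P -> measurable A ->
  cond_pr P A B <= GB_up lP A B.
Proof.
move=> cP mA; apply: ub_le_sup; last by exists P.
by exists 1 => _ [Q cQ <-]; apply: cond_pr_le1 mA mB; exact: pr_gt0.
Qed.

Lemma GB_low_ge0 A : 0 <= GB_low lP A B.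
Proof.
apply: lb_le_inf; first by case: core_n0 => P cP; exists (cond_pr P A B), P.
by move=> _ [P _ <-]; exact: cond_pr_ge0.
Qed.

Lemma GB_up_setC_le A : measurable A -> GB_up lP (~` A) B <= 1 - GB_low lP A B.
Proof.
move=> mA; apply: ge_sup; first by case: core_n0 => P cP; exists (cond_pr P (~` A) B), P.
move=> _ [P cP <-]; rewrite -/(cond_pr P (~` A) B) (cond_prC (pr_gt0 cP) mA mB).
by rewrite lerD2l lerN2; exact: GB_low_le_cond_pr.
Qed.

Lemma GB_low_setC_ge A : measurable A -> 1 - GB_up lP A B <= GB_low lP (~` A) B.
Proof.
move=> mA; apply: lb_le_inf; first by case: core_n0 => P cP; exists (cond_pr P (~` A) B), P.
move=> _ [P cP <-]; rewrite -/(cond_pr P (~` A) B) (cond_prC (pr_gt0 cP) mA mB).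
by rewrite lerD2l lerN2; exact: cond_pr_le_GB_up.
Qed.

Lemma GB_low_le_G_low A : measurable A -> GB_low lP A B <= G_low lP A B.
Proof.
move=> mA; rewrite /G_low ler_pdivlMr //.
apply: (lP_ge_lb core_n0 lP_infE) => [|P cP]; first exact: measurableI.
rewrite -(cond_prMpr (pr_gt0 cP)).
by apply: ler_pM; rewrite ?GB_low_ge0 ?lP_ge0 ?GB_low_le_cond_pr ?lP_le_pr.
Qed.

Lemma D_up_le_GB_up A : measurable A -> D_up lP A B <= GB_up lP A B.
Proof.
move=> mA; rewrite /D_up ler_pdivrMr //; apply: (upperP_le_ub core_n0) => P cP.
rewrite -(cond_prMpr (pr_gt0 cP)).
by apply: ler_pM; rewrite ?cond_pr_ge0 ?pr_ge0 ?cond_pr_le_GB_up ?pr_le_upperP.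
Qed.

Lemma G_low_le1 A : measurable A -> G_low lP A B <= 1.
Proof.
by move=> mA; rewrite /G_low ler_pdivrMr // mul1r le_lP //; exact: measurableI.
Qed.

Lemma D_up_ge0 A : measurable A -> 0 <= D_up lP A B.
Proof. by move=> mA; rewrite /D_up divr_ge0 // upperP_ge0 //; exact: measurableI. Qed.

Lemma Dempster_within_Bayes A : measurable A ->
  GB_low lP A B <= D_low lP A B <= 1 /\ 0 <= D_up lP A B <= GB_up lP A B.
Proof.
move=> mA; have mCA := measurableC mA.
split; last by rewrite D_up_ge0 // D_up_le_GB_up.
have := D_up_le_GB_up mCA; have := GB_up_setC_le mA; have := D_up_ge0 mCA.
by rewrite /D_low => *; apply/andP; split; lra.
Qed.

Lemma Geometric_within_Bayes A : measurable A ->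
  GB_low lP A B <= G_low lP A B <= 1 /\ 0 <= G_up lP A B <= GB_up lP A B.
Proof.
move=> mA; have mCA := measurableC mA.
split; first by rewrite GB_low_le_G_low // G_low_le1.
have := GB_low_le_G_low mCA; have := GB_low_setC_ge mA; have := G_low_le1 mCA.
by rewrite /G_up => *; apply/andP; split; lra.
Qed.

End ConditioningRules.

Section DilationTransfer.
Variables (R : realType) (T : completePseudoMetricType R).
Variable lP : set (Borel T) -> R.
Variables (low up low' up' : set (Borel T) -> set (Borel T) -> R).
Variables (BB : set (set (Borel T))) (A : set (Borel T)).
Hypothesis nested : forall B, BB B ->
  low' A B <= low A B <= 1 /\ 0 <= up A B <= up' A B.

Let sup_low'_le : sup [set low' A B | B in BB] <= sup [set low A B | B in BB].
Proof.
by apply: (le_sup_image _ (M := 1)) => B /nested[/andP[]].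
Qed.

Let inf_up_le : inf [set up A B | B in BB] <= inf [set up' A B | B in BB].
Proof.
by apply: (le_inf_image _ (M := 0)) => B /nested[_ /andP[]].
Qed.

Lemma dilates_nested : dilates lP low up BB A -> dilates lP low' up' BB A.
Proof.
case=> [[lowA lAuA uAup]|[lowA lAuA uAup]]; [left|right]; split => //.
- exact: le_trans sup_low'_le lowA.
- exact: lt_le_trans uAup inf_up_le.
- exact: le_lt_trans sup_low'_le lowA.
- exact: le_trans uAup inf_up_le.
Qed.

Lemma strictly_dilates_nested :
  strictly_dilates lP low up BB A -> strictly_dilates lP low' up' BB A.
Proof.
case=> lowA lAuA uAup; split => //.
- exact: le_lt_trans sup_low'_le lowA.
- exact: lt_le_trans uAup inf_up_le.
Qed.

End DilationTransfer.

Theorem corollary5p6 (R : realType) (T : completePseudoMetricType R)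
  (Thaus : hausdorff_space T)
  (Tsep : exists D : set T, countable D /\ dense D)
  (lP : set (Borel T) -> R) (HlP : choquet2 lP)
  (BB : set (set (Borel T))) (HBB : borel_partition BB)
  (HBpos : forall B, BB B -> 0 < lP B)
  (A : set (Borel T)) (mA : measurable A) :
  ((dilates lP (D_low lP) (D_up lP) BB A \/
    dilates lP (G_low lP) (G_up lP) BB A) ->
   dilates lP (GB_low lP) (GB_up lP) BB A) /\
  ((strictly_dilates lP (D_low lP) (D_up lP) BB A \/
    strictly_dilates lP (G_low lP) (G_up lP) BB A) ->
   strictly_dilates lP (GB_low lP) (GB_up lP) BB A).
Proof.
have [core_n0 lP_infE _ _] := HlP; have [mBB _ _] := HBB.
have D_nested B : BB B -> _ :=
  fun BBB => Dempster_within_Bayes core_n0 lP_infE (mBB B BBB) (HBpos B BBB) mA.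
have G_nested B : BB B -> _ :=
  fun BBB => Geometric_within_Bayes core_n0 lP_infE (mBB B BBB) (HBpos B BBB) mA.
split; case.
- exact: dilates_nested D_nested.
- exact: dilates_nested G_nested.
- exact: strictly_dilates_nested D_nested.
- exact: strictly_dilates_nested G_nested.
Qed.
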